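(* Let $X=(V,E,T)$ be an $(s,k,K)$-two layer system and let $C\subseteq\mathbb{F}_p^V$ be a linear code modelled over $X$ with constraint set $\mathcal{E}$ ($p$ a prime power). For every $v_0\in V$ and every $\underline{c}\in\mathbb{F}_p^V$ there is $\underline{c}'\in\mathbb{F}_p^V$ with $\underline{c}'(v)=\underline{c}(v)$ for all $v\ne v_0$ and $$\frac{m_{v_0}(\{\operatorname{supp}(\underline{e}):\underline{e}\in\mathcal{E},\ \operatorname{supp}(\underline{e})\in E_{v_0},\ \underline{e}\cdot\underline{c}'\neq0\})}{m_{v_0}(E_{v_0})}\le\frac{p-1}{p}.$$
   Context: Let $s,k,K$ be positive integers. An $(s,k,K)$-two layer system is a triple $X=(V,E,T)$ where: $V$ is a finite set; $E\subseteq 2^V$ with $|\tau|=k$ for all $\tau\in E$ and $\bigcup_{\tau\in E}\tau=V$; $T\subseteq 2^E$ with $|\sigma|=K$ for all $\sigma\in T$ and $\bigcup_{\sigma\in T}\sigma=E$. Write $v\in\sigma$ if $v\in\tau$ for some $\tau\in\sigma$; it is required that $2\le|\{\tau\in\sigma:v\in\tau\}|\le s$ for all $\sigma\in T$, $v\in\sigma$. A positive $w:T\to\mathbb{R}_{>0}$ is fixed and extended by $w(\tau)=\sum_{\sigma\ni\tau}w(\sigma)$ for $\tau\in E$. For $v\in V$, $E_v=\{\tau\in E:v\in\tau\}$; the link of $v$ is the graph on $E_v$ where distinct $\tau_1,\tau_2$ are adjacent iff some $\sigma\in T$ contains both, with weight $m_v(\{\tau_1,\tau_2\})=\sum_{\sigma\in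 T,\tau_1,\tau_2\in\sigma}w(\sigma)$; $m_v(\tau)$ is the sum of weights of link edges at $\tau$, and $m_v(B)=\sum_{\tau\in B}m_v(\tau)$ for $B\subseteq E_v$. Codes: $\mathbb{F}_p$ is the field with $p$ elements; $\underline{e}\cdot\underline{c}=\sum_v\underline{e}(v)\underline{c}(v)$, $\operatorname{supp}(\underline{e})=\{v:\underline{e}(v)\neq0\}$. A linear code $C\subseteq\mathbb{F}_p^V$ is modelled over $X$ if there is $\mathcal{E}\subseteq\mathbb{F}_p^V$ with $C=\{\underline{c}:\underline{e}\cdot\underline{c}=0\ \forall\underline{e}\in\mathcal{E}\}$ such that $\underline{e}\mapsto\operatorname{supp}(\underline{e})$ is a bijection $\mathcal{E}\to E$, and a set $\mathcal{T}$ of linear dependencies (functions $\operatorname{ld}:\mathcal{E}\to\mathbb{F}_p$ with $\sum_{\underline{e}}\operatorname{ld}(\underline{e})(\underline{e}\cdot\underline{c})=0$ for all $\underline{c}$) with $T=\{\{\operatorname{supp}(\underline{e}):\operatorname{ld}(\underline{e})\ne0\}:\operatorname{ld}\in\mathcal{T}\}$. *)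

From HB Require Import structures.
From mathcomp Require Import all_boot all_order all_algebra.
Set Implicit Arguments. Unset Strict Implicit. Unset Printing Implicit Defensive.
Import Order.TTheory GRing.Theory Num.Theory.
Local Open Scope ring_scope.

Definition supp (F : fieldType) (V : finType) (e : {ffun V -> F}) : {set V} :=
  [set v | e v != 0].

Definition dot (F : fieldType) (V : finType) (e c : {ffun V -> F}) : F :=
  \sum_(v : V) e v * c v.

Definition two_layer_system (V : finType) (s k K : nat)
    (E : {set {set V}}) (T : {set {set {set V}}}) : Prop :=
  ((0 < s) /\ (0 < k) /\ (0 < K) /\
      (forall tau, tau \in E -> #|tau| = k) /\
      \bigcup_(tau in E) tau = [set: V] /\
      (forall sigma, sigma \in T -> sigma \subset E /\ #|sigma| = K) /\
      \bigcup_(sigma in T) sigma = E /\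
      (forall sigma v, sigma \in T -> (exists2 tau, tau \in sigma & v \in tau) ->
         2 <= #|[set tau in sigma | v \in tau]| <= s))%N.

Definition Ev (V : finType) (E : {set {set V}}) (v : V) : {set {set V}} :=
  [set tau in E | v \in tau].

Definition m_edge (V : finType) (R : numDomainType) (T : {set {set {set V}}})
    (w : {set {set V}} -> R) (tau1 tau2 : {set V}) : R :=
  \sum_(sigma in T | (tau1 \in sigma) && (tau2 \in sigma)) w sigma.

(* m_v(tau): sum of weights of link edges at tau (non-adjacent pairs have weight 0) *)
Definition m_vert (V : finType) (R : numDomainType) (E : {set {set V}})
    (T : {set {set {set V}}}) (w : {set {set V}} -> R) (v : V) (tau : {set V}) : R :=
  \sum_(tau2 in Ev E v | tau2 != tau) m_edge T w tau tau2.

Definition m_set (V : finType) (R : numDomainType) (E : {set {set V}})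
    (T : {set {set {set V}}}) (w : {set {set V}} -> R) (v : V) (B : {set {set V}}) : R :=
  \sum_(tau in B) m_vert E T w v tau.

(* A linear dependency ld : calE -> F is represented by a finite function on
   all of F^V, only its values on calE being relevant. *)
Definition modelled_over (F : finFieldType) (V : finType)
    (E : {set {set V}}) (T : {set {set {set V}}})
    (C : {set {ffun V -> F}}) (calE : {set {ffun V -> F}})
    (calT : {set {ffun {ffun V -> F} -> F}}) : Prop :=
  [/\ C = [set c | [forall e in calE, dot e c == 0]],
      {in calE &, injective (@supp F V)},
      [set supp e | e in calE] = E,
      (forall ld : {ffun {ffun V -> F} -> F}, ld \in calT -> forall c : {ffun V -> F},
          \sum_(e in calE) ld e * dot e c = 0) &
      T = [set [set supp e | e in calE & ld e != 0] | ld : {ffun {ffun V -> F} -> F} in calT]].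

From HB Require Import structures.
From mathcomp Require Import all_boot all_order all_algebra.
Import Order.TTheory GRing.Theory Num.Theory.
Local Open Scope ring_scope.

(* Average over the q = #|F| possible values of the coordinate c(v0).  A
   constraint e with e(v0) != 0 is a non-constant affine function of c(v0), so
   exactly q - 1 of these values violate it.  Summed over all q choices, the
   violated m_{v0}-weight is therefore (q - 1) m_{v0}(E_{v0}), and the cheapest
   choice violates at most a (q - 1)/q fraction of m_{v0}(E_{v0}). *)

(* No positivity of d is needed: for d = 0 the left side is x / 0 = 0. *)
Lemma ler_div_of_mulrn (R : realFieldType) (x d : R) (m n : nat) :
  (0 < n)%N -> 0 <= d -> x *+ n <= d *+ m -> x / d <= m%:R / n%:R.
Proof.
move=> n_gt0 d_ge0 le_xd.
have [->|d_neq0] := eqVneq d 0.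
  by rewrite invr0 mulr0; apply: divr_ge0; apply: ler0n.
have d_gt0 : 0 < d by rewrite lt_def d_neq0.
by rewrite ler_pdivrMr // mulrAC ler_pdivlMr ?ltr0n // [_ * d]mulrC !mulr_natr.
Qed.

Lemma exists_mulrn_card_le_sum {R : realDomainType} {I : finType} (i0 : I)
    (f : I -> R) :
  exists i, f i *+ #|I| <= \sum_j f j.
Proof.
have [i _ f_min] := arg_minP f (isT : predT i0).
by exists i; rewrite -sumr_const; apply: ler_sum => j _; apply: f_min.
Qed.

Lemma card_affine_neq0 {F : finFieldType} (x r : F) :
  x != 0 -> #|[set a : F | x * a + r != 0]| = #|F|.-1.
Proof.
move=> x_neq0; rewrite -(cardsC1 (- r / x)); apply: eq_card => a.
rewrite !inE addr_eq0; congr negb; apply/eqP/eqP => [<-|->].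
  by rewrite mulrC mulKf.
by rewrite mulrC divfK.
Qed.

Lemma sub_imsetE {aT rT : finType} {f : aT -> rT} {A : {set aT}}
    {B : {set rT}} :
  B \subset f @: A -> B = [set f x | x in A & f x \in B].
Proof.
move=> /subsetP sBfA; apply/setP => y; apply/idP/imsetP => [By|[x]].
  by have /imsetP[x Ax y_eq] := sBfA y By; exists x; rewrite // inE Ax -y_eq.
by rewrite inE => /andP[_ By] ->.
Qed.

Section Coordinate.

Context {F : finFieldType} {V : finType}.
Implicit Types (c e : {ffun V -> F}) (v : V) (a : F).

Definition set_coord c v0 a : {ffun V -> F} :=
  [ffun v => if v == v0 then a else c v].

Lemma set_coord_neq c v0 a v : v != v0 -> set_coord c v0 a v = c v.
Proof. by rewrite ffunE => /negbTE ->. Qed.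

Lemma dot_set_coord e c v0 a :
  dot e (set_coord c v0 a) = e v0 * a + \sum_(v | v != v0) e v * c v.
Proof.
rewrite /dot (bigD1 v0) //= ffunE eqxx; congr (_ + _).
by apply: eq_bigr => v v_neq0; rewrite set_coord_neq.
Qed.

Lemma card_dot_set_coord_neq0 e c v0 :
  e v0 != 0 -> #|[set a | dot e (set_coord c v0 a) != 0]| = #|F|.-1.
Proof.
move=> ev0_neq0.
rewrite -(card_affine_neq0 _ (\sum_(v | v != v0) e v * c v) ev0_neq0).
by apply: eq_card => a; rewrite !inE dot_set_coord.
Qed.

Lemma sum_violated_set_coord {M : nmodType} c v0 (A : {pred {ffun V -> F}})
    (Q : pred {ffun V -> F}) (g : {ffun V -> F} -> M) :
  {in A, forall e, Q e -> e v0 != 0} ->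
  \sum_a \sum_(e in A | Q e && (dot e (set_coord c v0 a) != 0)) g e
    = (\sum_(e in A | Q e) g e) *+ #|F|.-1.
Proof.
move=> Q_v0; rewrite -sumrMnl.
under eq_bigr do rewrite (eq_bigl _ _ (fun e => andbA _ _ _)) big_mkcondr /=.
rewrite exchange_big /=; apply: eq_bigr => e /andP[Ae Qe].
by rewrite -big_mkcond sumr_const -cardsE card_dot_set_coord_neq0 ?Q_v0.
Qed.

End Coordinate.

Section Link.

Variables (V : finType) (R : numDomainType).
Variables (E : {set {set V}}) (T : {set {set {set V}}}).
Variable w : {set {set V}} -> R.

Lemma m_vert_ge0 v tau :
  (forall sigma, sigma \in T -> 0 <= w sigma) -> 0 <= m_vert E T w v tau.
Proof.
move=> w_ge0; apply: sumr_ge0 => tau2 _.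
by apply: sumr_ge0 => sigma /andP[/w_ge0].
Qed.

Lemma m_set_supp_imset (F : finFieldType) (A : {set {ffun V -> F}})
    (P : pred {ffun V -> F}) v :
  {in A &, injective (@supp F V)} ->
  m_set E T w v [set supp e | e in A & P e]
    = \sum_(e in A | P e) m_vert E T w v (supp e).
Proof.
move=> supp_inj; rewrite /m_set big_imset /=.
  by apply: eq_bigl => e; rewrite inE.
by move=> e1 e2 /[!inE] /andP[A1 _] /andP[A2 _]; apply: supp_inj.
Qed.

End Link.

Theorem lemma3p6 (R : realFieldType) (F : finFieldType) (V : finType)
    (s k K : nat) (E : {set {set V}}) (T : {set {set {set V}}})
    (w : {set {set V}} -> R)
    (C : {set {ffun V -> F}}) (calE : {set {ffun V -> F}})
    (calT : {set {ffun {ffun V -> F} -> F}}) :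
  two_layer_system s k K E T ->
  (forall sigma, sigma \in T -> 0 < w sigma) ->
  modelled_over E T C calE calT ->
  forall (v0 : V) (c : {ffun V -> F}),
  exists c' : {ffun V -> F},
    (forall v, v != v0 -> c' v = c v) /\
    m_set E T w v0
      [set supp e | e in calE & (supp e \in Ev E v0) && (dot e c' != 0)]
    / m_set E T w v0 (Ev E v0)
    <= (#|F|.-1)%:R / (#|F|)%:R.
Proof.
move=> _ w_gt0 [_ supp_inj imE _ _] v0 c.
pose violated (a : F) :=
  \sum_(e in calE | (supp e \in Ev E v0) && (dot e (set_coord c v0 a) != 0))
    m_vert E T w v0 (supp e).
have [a violated_min] := exists_mulrn_card_le_sum 0 violated.
exists (set_coord c v0 a); split=> [v|]; first exact: set_coord_neq.
have Ev_sub : Ev E v0 \subset [set supp e | e in calE].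
  by rewrite imE; apply/subsetP => tau /[!inE] /andP[].
rewrite m_set_supp_imset // [X in m_set _ _ _ _ X](sub_imsetE Ev_sub).
rewrite m_set_supp_imset //.
apply: ler_div_of_mulrn; first by apply/card_gt0P; exists 0.
  by apply: sumr_ge0 => e _; apply: m_vert_ge0 => sigma /w_gt0/ltW.
rewrite -(sum_violated_set_coord c v0) => [|e _]; first exact: violated_min.
by rewrite inE => /andP[_]; rewrite inE.
Qed.
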